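(* Let $\mathcal N$ be a normal network on $X$ with $|X|\ge 3$, and let $\mathcal R$ and $\mathcal Q$ be the sets of triples and quads displayed by $\mathcal N$. Let $a,b,c\in X$ be distinct. Then $\{a,b,c\}$ is a double-reticulated cherry of $\mathcal N$ with reticulation leaf $b$ if and only if: (i) $ab|x\in\mathcal R$ for all $x\in X-\{a,b\}$, $bc|x\in\mathcal R$ for all $x\in X-\{b,c\}$, and $ac|b\notin\mathcal R$; (ii) there is no $x\in X-\{a,b,c\}$ such that any of $(x,b,a,c)$, $(x,b,c,a)$, $(x,a,b,c)$, $(x,c,b,a)$ lies in $\mathcal Q$; (iii) if there exists $x\in X-\{a,b,c\}$ with $ac|x\in\mathcal R$, then $(a,b,c,x)\in\mathcal Q$ and $(c,b,a,x)\in\mathcal Q$.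
   Context: Phylogenetic network on $X$ (rooted, binary): rooted acyclic digraph without parallel arcs; root has in-degree $0$, out-degree $2$; leaves (out-degree $0$) have in-degree $1$ and form $X$; other vertices are tree vertices (in-degree $1$, out-degree $2$) or reticulations (in-degree $2$, out-degree $1$). A reticulation arc $(u,v)$ is a shortcut if another directed path from $u$ to $v$ exists. Tree-child: every non-leaf vertex has a child that is a tree vertex or leaf; normal: tree-child with no shortcuts. $p_x$ is the parent of leaf $x$. $\{a,b\}$ is a reticulated cherry with reticulation leaf $b$ if $p_b$ is a reticulation and $(p_a,p_b)$ is an arc. $\{a,b,c\}$ is a double-reticulated cherry with reticulation leaf $b$ if $p_b$ is a reticulation and both $\{a,b\}$ and $\{b,c\}$ are reticulated cherries (i.e. the two parents of $p_b$ are $p_a$ and $p_c$). A caterpillar $(x_1,\dots,x_n)$ is a phylogenetic tree in which $x_1,x_2$ share a parent and for $2\le i\le n-1$ the parent of $x_{i+1}$ is the parent of the parent of $x_i$; $(x_1,x_2,\dots)$ and $(x_2,x_1,\dots)$ coincide. Triples: caterpillars on 3 leaves, written $x_1x_2|x_3$; quads: caterpillars on 4 leaves. A network displays a tree if the tree is obtained by deleting arcs and vertices and suppressing in-degree-one out-degree-one vertices. *)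

From mathcomp Require Import all_boot.
Set Implicit Arguments. Unset Strict Implicit. Unset Printing Implicit Defensive.

Section Networks.
Variable V : finType.
Variable E : rel V.   (* arc relation: E u v <=> (u,v) is an arc; no parallel arcs *)

Definition indeg (v : V) : nat := #|[set u | E u v]|.
Definition outdeg (v : V) : nat := #|[set w | E v w]|.

Definition is_leaf (v : V) : bool := (indeg v == 1) && (outdeg v == 0).
Definition tree_vertex (v : V) : bool := (indeg v == 1) && (outdeg v == 2).
Definition reticulation (v : V) : bool := (indeg v == 2) && (outdeg v == 1).

Definition leaves : {set V} := [set v | is_leaf v].

Definition acyclic : Prop := forall u v, E u v -> ~~ connect E v u.

Definition phylo_network (r : V) : Prop :=
  [/\ acyclic,
      indeg r = 0, outdeg r = 2 &
      forall v, v != r -> [|| is_leaf v, tree_vertex v | reticulation v]].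

Definition tree_child : Prop :=
  forall v, ~~ is_leaf v -> exists w, E v w && (tree_vertex w || is_leaf w).

Definition shortcut (u v : V) : Prop :=
  [/\ E u v, reticulation v & exists w, [/\ w != v, E u w & connect E w v]].

Definition normal_network (r : V) : Prop :=
  [/\ phylo_network r, tree_child & forall u v, ~ shortcut u v].

Definition reticulated_cherry (a b : V) : Prop :=
  exists pa pb, [/\ E pa a, E pb b, reticulation pb & E pa pb].

Definition double_reticulated_cherry (a b c : V) : Prop :=
  reticulated_cherry a b /\ reticulated_cherry c b.

(* Caterpillar (x_0,...,x_{n-1}) as a tree on node set {0,..,2n-2} (nats):
   node i < n is the leaf x_i; node n+j (j <= n-2) is internal;
   n+0 is the parent of x_0 and x_1; for 1 <= j <= n-2, n+j is the parent
   of n+j-1 and of x_{j+1}.  The root is n+(n-2). *)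
Definition cat_arcs (n : nat) : seq (nat * nat) :=
  (n, 0) :: (n, 1) ::
  flatten [seq [:: (n + j, n + j - 1); (n + j, j.+1)] | j <- iota 1 (n - 2)].

(* N displays the caterpillar xs: some subgraph of N is a subdivision of the
   caterpillar (i.e. the caterpillar is obtained by deleting arcs/vertices
   and suppressing in-degree-1 out-degree-1 vertices).  phi maps tree nodes
   to network vertices (leaves to the corresponding leaves), P s t lists the
   interior vertices of the directed path realizing tree arc (s,t). *)
Definition displays_caterpillar (xs : seq V) : Prop :=
  let n := size xs in
  [/\ 2 <= n, uniq xs, all (fun x => x \in leaves) xs &
   exists (phi : nat -> V) (P : nat -> nat -> seq V),
     [/\ map phi (iota 0 n) = xs,
         (forall s t, (s, t) \in cat_arcs n ->
            path E (phi s) (rcons (P s t) (phi t))) &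
         uniq (flatten [seq P st.1 st.2 | st <- cat_arcs n]
               ++ map phi (iota 0 (2 * n - 1)))]].

(* triple x1x2|x3 and quad (x1,x2,x3,x4) displayed by N *)
Definition triple_in (x1 x2 x3 : V) : Prop := displays_caterpillar [:: x1; x2; x3].
Definition quad_in (x1 x2 x3 x4 : V) : Prop :=
  displays_caterpillar [:: x1; x2; x3; x4].

End Networks.

From mathcomp Require Import all_boot zify.
Set Implicit Arguments. Unset Strict Implicit. Unset Printing Implicit Defensive.

(* A tree displayed by N lives in a switching: the spanning tree obtained by
   keeping one incoming arc at every non-root vertex.  Taking lowest common
   ancestors there, a triple xy|z is displayed iff some switching has a vertex
   above x and y but not above z, and similarly for quads.

   If the parent p_b of b is a reticulation with parents p_a and p_c, every
   switching sends b through p_a or p_c; this rules out ac|b and the quads of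
   (ii), while rerouting p_b through p_a or p_c produces the triples of (i)
   and the quads of (iii).

   Conversely, let p be the parent of b.  If p were a tree vertex, its other
   child w would lead down, through vertices of in-degree one, to a leaf y;
   conditions (i)-(iii) force w to be a reticulation and y to be a or c, and
   then produce a forbidden quad.  So p is a reticulation.  Each parent q of p
   has a child z <> p of in-degree one (tree-child) leading down to a or c;
   the two leaves differ because N has no shortcuts, and (ii) forces z to be
   that leaf. *)

Lemma perm_flatten_cons (S T : eqType) (F G : S -> seq T) (g : S -> T) s :
  {in s, forall x, perm_eq (G x) (g x :: F x)} ->
  perm_eq (flatten (map G s)) (flatten (map F s) ++ map g s).
Proof.
elim: s => //= x s IHs GF; apply/permP => a.
move/permP: (GF x (mem_head x s)) => /(_ a) /= Gx.
move/permP: (IHs (fun y ys => GF y (@mem_behead _ (x :: s) y ys))) => /(_ a).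
rewrite !count_cat /= Gx; lia.
Qed.

Lemma path_zipE (T : eqType) (e : rel T) x p :
  path e x p = all [pred uw | e uw.1 uw.2] (zip (x :: p) p).
Proof. by elim: p x => //= y p IHp x; rewrite IHp. Qed.

Lemma unzip2_inj (S T : eqType) (L : seq (S * T)) u u' w :
  uniq (unzip2 L) -> (u, w) \in L -> (u', w) \in L -> u = u'.
Proof.
elim: L => [|[a b] L IHL] //= /andP [bL uL].
rewrite !inE => /orP [/eqP [-> wb]|uwL] /orP [/eqP [-> w'b]|u'wL] //.
- by case/negP: bL; rewrite -wb; apply: (map_f snd u'wL).
- by case/negP: bL; rewrite -w'b; apply: (map_f snd uwL).
- exact: IHL.
Qed.

Lemma uniq3 (T : eqType) (x y z : T) : uniq [:: x; y; z] = [&& x != y, x != z & y != z].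
Proof. by rewrite /= !inE !negb_or andbT andbA. Qed.

Lemma cat_arcs_snd n : 2 <= n ->
  perm_eq (map snd (cat_arcs n) ++ [:: 2 * n - 2]) (iota 0 (2 * n - 1)).
Proof.
case: n => [|[|n]] // _.
have -> : 2 * n.+2 - 1 = 2 + n + n + 1 by lia.
have -> : 2 * n.+2 - 2 = 2 + n + n by lia.
rewrite !iotaD /= subn2 /= map_flatten -map_comp !perm_cons perm_cat2r.
apply: perm_trans (@perm_flatten_cons _ _ (fun j => [:: j.+1]) _
  (fun j => n.+2 + j - 1) _ _) _; first by [].
rewrite flatten_map1.
have -> : [seq j.+1 | j <- iota 1 n] = iota 2 n.
  by rewrite -[iota 2 _]/(iota (1 + 1) _) iotaDl; apply: eq_map => j; rewrite add1n.
have -> : [seq n.+2 + j - 1 | j <- iota 1 n] = iota (2 + n) n.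
  rewrite (_ : 2 + n = n.+1 + 1) ?iotaDl; last by lia.
  by apply/eq_in_map => j; rewrite mem_iota; lia.
by [].
Qed.

Lemma uniq_caterpillar_nodes (T : eqType) n (phi : nat -> T) (P : nat -> nat -> seq T)
    (G : nat * nat -> seq T) : 2 <= n ->
  {in cat_arcs n, forall st, perm_eq (G st) (phi st.2 :: P st.1 st.2)} ->
  uniq (flatten (map G (cat_arcs n)) ++ [:: phi (2 * n - 2)]) =
  uniq (flatten [seq P st.1 st.2 | st <- cat_arcs n] ++ map phi (iota 0 (2 * n - 1))).
Proof.
move=> n2 GP; apply: perm_uniq; apply: perm_trans (perm_cat (perm_flatten_cons GP) (perm_refl _)) _.
rewrite -catA perm_cat2l; apply: perm_trans (perm_map phi (cat_arcs_snd n2)).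
by rewrite map_cat -map_comp.
Qed.

(** * Ancestry along the iterates of a function *)

Section Orbits.
Variables (T : finType) (f : T -> T).

Lemma fconnectP x y : reflect (exists n, iter n f x = y) (fconnect f x y).
Proof.
apply: (iffP idP) => [xy|[n <-]]; last exact: fconnect_iter.
by exists (findex f x y); apply: iter_findex.
Qed.

Lemma fconnect1_eq x y : f x = y -> fconnect f x y.
Proof. by move=> <-; apply: fconnect1. Qed.

Lemma fconnect_split x y : fconnect f x y -> y = x \/ fconnect f (f x) y.
Proof.
case/fconnectP => -[|n] <-; first by left.
by right; apply/fconnectP; exists n; rewrite iterSr.
Qed.

Lemma fconnect_neq x y : fconnect f x y -> x != y -> fconnect f (f x) y.
Proof. by case/fconnect_split => [->|//]; rewrite eqxx. Qed.

Lemma fconnect_total x y z :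
  fconnect f x y -> fconnect f x z -> fconnect f y z || fconnect f z y.
Proof.
case/fconnectP => i <- /fconnectP [j <-]; apply/orP.
have [ij|ji] := leqP i j.
  by left; apply/fconnectP; exists (j - i); rewrite -iterD subnK.
by right; apply/fconnectP; exists (i - j); rewrite -iterD subnK // ltnW.
Qed.

Lemma iter_lt_findex x y i : i < findex f x y -> iter i f x != y.
Proof.
move=> lt_i; apply/eqP => xy.
have fxy : fconnect f x y by rewrite -xy; apply: fconnect_iter.
have := findex_iter (ltn_trans lt_i (findex_max fxy)).
by rewrite xy => i_eq; rewrite i_eq ltnn in lt_i.
Qed.

Definition orbit_until x m := traject f x (findex f x m).

Lemma orbit_until_uniq x m : uniq (orbit_until x m).
Proof.
have le_order : findex f x m <= order f x by rewrite -size_orbit index_size.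
have := orbit_uniq f x; rewrite /orbit -(subnKC le_order) trajectD cat_uniq.
by case/andP.
Qed.

Lemma mem_orbit_until x m t : t \in orbit_until x m -> fconnect f x t.
Proof. by case/trajectP => i _ ->; apply: fconnect_iter. Qed.

Lemma mem_orbit_until_below x m t : fconnect f x m -> t \in orbit_until x m ->
  fconnect f t m /\ t != m.
Proof.
move=> xm /trajectP [i lt_i ->]; split; last exact: iter_lt_findex.
apply/fconnectP; exists (findex f x m - i).
by rewrite -iterD subnK ?iter_findex // ltnW.
Qed.

Lemma orbit_until_cons x m : x != m -> orbit_until x m = x :: behead (orbit_until x m).
Proof.
move=> xm; rewrite /orbit_until; case e: (findex f x m) => [|n] //.
by move/eqP: e; rewrite findex_eq0 (negbTE xm).
Qed.

End Orbits.

(** * Normal networks *)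

Section Network.
Variables (V : finType) (E : rel V) (r : V).
Hypothesis normalN : normal_network E r.

Lemma arc_no_return u v : E u v -> ~~ connect E v u.
Proof. by case: normalN => -[acyc _ _ _] _ _; apply: acyc. Qed.

Lemma root_no_parent u : ~~ E u r.
Proof.
case: normalN => -[_ /eqP + _ _] _ _; rewrite cards_eq0 => /eqP root0.
by apply/negP => Eur; have := in_set0 u; rewrite -root0 inE Eur.
Qed.

Lemma vertex_kind v : v != r -> [|| is_leaf E v, tree_vertex E v | reticulation E v].
Proof. by case: normalN => -[_ _ _ kind] _ _; apply: kind. Qed.

Lemma arc_irrefl u : ~~ E u u.
Proof. by apply/negP => Euu; move: (arc_no_return Euu); rewrite connect0. Qed.

Lemma connect_antisym u v : connect E u v -> connect E v u -> u = v.
Proof.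
move=> /connectP [[|w p] //= /andP [Euw wp] ->] vu.
have /negP[] := arc_no_return Euw.
by apply: connect_trans vu; apply/connectP; exists p.
Qed.

Lemma outdeg_le2 v : outdeg E v <= 2.
Proof.
have [->|vr] := eqVneq v r; first by case: normalN => -[_ _ ->].
by case/or3P: (vertex_kind vr) => /andP [_ /eqP ->].
Qed.

Lemma leaf_indeg v : is_leaf E v -> indeg E v = 1.
Proof. by case/andP => /eqP. Qed.

Lemma leaf_no_child v w : is_leaf E v -> ~~ E v w.
Proof.
case/andP => _ /eqP; rewrite /outdeg => /eqP; rewrite cards_eq0 => /eqP out0.
by apply/negP => Evw; have := in_set0 w; rewrite -out0 inE Evw.
Qed.

Lemma leaf_not_tail v w u : is_leaf E v -> E w u -> v != w.
Proof. by move=> lv Ewu; apply: contraTneq Ewu => <-; apply: leaf_no_child. Qed.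

Lemma connect_leaf v x : is_leaf E v -> connect E v x -> x = v.
Proof.
move=> lv /connectP [[|w p] //= /andP [Evw _] _].
by move: (leaf_no_child w lv); rewrite Evw.
Qed.

Lemma mem_card_le2 (A : {set V}) x y z :
  #|A| <= 2 -> x \in A -> y \in A -> z \in A -> x != y -> z = x \/ z = y.
Proof.
move=> A2 xA yA zA xy.
have [|zx] := eqVneq z x; first by left.
have [|zy] := eqVneq z y; first by right.
move: A2; rewrite leqNgt => /negP []; apply/card_gt2P.
by exists x, y, z; rewrite xy zx eq_sym zy.
Qed.

Lemma child_cases v u1 u2 k :
  E v u1 -> E v u2 -> u1 != u2 -> E v k -> k = u1 \/ k = u2.
Proof.
move=> E1 E2 u12 Ek.
by apply: (@mem_card_le2 [set w | E v w]); rewrite ?inE ?outdeg_le2.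
Qed.

Lemma reticulation_parent_cases v u1 u2 k : reticulation E v ->
  E u1 v -> E u2 v -> u1 != u2 -> E k v -> k = u1 \/ k = u2.
Proof.
case/andP => /eqP in2 _ E1 E2 u12 Ek.
by apply: (@mem_card_le2 [set w | E w v]); rewrite ?inE -/(indeg E v) ?in2.
Qed.

Lemma indeg1_parent v u u' : indeg E v = 1 -> E u v -> E u' v -> u = u'.
Proof.
move=> in1 Euv Eu'v.
by apply: (card_le1_eqP (_ : #|[set w | E w v]| <= 1)); rewrite ?inE -/(indeg E v) ?in1.
Qed.

Lemma outdeg1_child v u u' : outdeg E v = 1 -> E v u -> E v u' -> u = u'.
Proof.
move=> out1 Evu Evu'.
by apply: (card_le1_eqP (_ : #|[set w | E v w]| <= 1)); rewrite ?inE -/(outdeg E v) ?out1.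
Qed.

Lemma reticulation_parents v :
  reticulation E v -> exists u1 u2, [/\ E u1 v, E u2 v & u1 != u2].
Proof.
case/andP => /cards2P [x [y [xy in2]]] _.
have : x \in [set x; y] by rewrite !inE eqxx.
have : y \in [set x; y] by rewrite !inE eqxx orbT.
by rewrite -in2 !inE => Eyv Exv; exists x, y.
Qed.

Lemma other_child v u : outdeg E v = 2 -> E v u -> exists w, E v w /\ w != u.
Proof.
move=> /eqP /cards2P [x [y [xy out2]]] Evu.
have : x \in [set x; y] by rewrite !inE eqxx.
have : y \in [set x; y] by rewrite !inE eqxx orbT.
rewrite -out2 !inE => Evy Evx; have [xu|] := eqVneq x u; last by exists x.
by exists y; rewrite -xu eq_sym.
Qed.

Lemma nonroot_parent v : v != r -> exists u, E u v.
Proof.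
move=> vr; have : 0 < indeg E v by case/or3P: (vertex_kind vr) => /andP [/eqP -> _].
by rewrite card_gt0 => /set0Pn [u]; rewrite inE; exists u.
Qed.

Lemma nonleaf_outdeg2 v : ~~ is_leaf E v -> ~~ reticulation E v -> outdeg E v = 2.
Proof.
move=> nlv nrv; have [->|vr] := eqVneq v r; first by case: normalN => -[_ _ ->].
by case/or3P: (vertex_kind vr) nlv nrv => [->|/andP [_ /eqP]|->].
Qed.

Lemma tree_child_of v : ~~ is_leaf E v -> exists w, E v w /\ indeg E w = 1.
Proof.
move=> nlv; case: normalN => _ /(_ v nlv) [w /andP [Evw /orP w_kind]] _.
by exists w; case: w_kind => /andP [/eqP].
Qed.

Lemma no_shortcut_path p q z : reticulation E p -> E q p -> E q z -> z != p ->
  ~~ connect E z p.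
Proof.
move=> rp Eqp Eqz zp; apply/negP => zp'.
by case: normalN => _ _ /(_ q p); apply; split => //; exists z.
Qed.

(** * Switchings *)

(* A switching [f] keeps the arc [(f v, v)] at every non-root vertex [v];
   [fconnect f x u] says that [u] is an ancestor of [x] in the resulting
   spanning tree. *)
Definition switching (f : V -> V) := f r = r /\ forall v, v != r -> E (f v) v.

Section Switching.
Variable f : V -> V.
Hypothesis sw_f : switching f.

Lemma switching_arc v : v != r -> E (f v) v.
Proof. by case: sw_f => _; apply. Qed.

Lemma iter_switching_root n : iter n f r = r.
Proof. by elim: n => //= n ->; case: sw_f. Qed.

Lemma fconnect_connect x u : fconnect f x u -> connect E u x.
Proof.
case/fconnectP => n <-; elim: n => [|n IHn] /=; first exact: connect0.
have [xr|xr] := eqVneq (iter n f x) r; first by rewrite xr (proj1 sw_f) -xr.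
by apply: connect_trans IHn; apply/connect1/switching_arc.
Qed.

Lemma fconnect_antisym x u : fconnect f x u -> fconnect f u x -> x = u.
Proof. by move=> /fconnect_connect ux /fconnect_connect xu; apply: connect_antisym. Qed.

Lemma fconnect_child x u : fconnect f x u -> x != u ->
  exists k, [/\ f k = u, k != u, E u k & fconnect f x k].
Proof.
case/fconnectP => n; elim: n x => [|n IHn] x; first by move=> /= ->; rewrite eqxx.
rewrite iterSr => xu x_neq_u; have [fx_u|fx_neq_u] := eqVneq (f x) u.
  have xr : x != r by apply: contra x_neq_u => /eqP xr; rewrite -fx_u xr (proj1 sw_f).
  by exists x; split; rewrite ?connect0 // -fx_u; apply: switching_arc.
have [k [fk k_neq Euk xk]] := IHn _ xu fx_neq_u.
by exists k; split => //; apply: connect_trans (fconnect1 f x) xk.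
Qed.

Lemma fconnect_leaf x v : is_leaf E v -> fconnect f x v -> x = v.
Proof. by move=> lv /fconnect_connect; apply: connect_leaf. Qed.

Lemma switching_indeg1 v u : indeg E v = 1 -> E u v -> f v = u.
Proof.
move=> in1 Euv; have vr : v != r by apply: contraTneq Euv => ->; apply: root_no_parent.
exact: indeg1_parent in1 (switching_arc vr) Euv.
Qed.

Lemma arc_not_fconnect u w : E u w -> ~~ fconnect f u w.
Proof. by move=> Euw; apply: contraNN (arc_no_return Euw); apply: fconnect_connect. Qed.

Lemma fconnect_root x : fconnect f x r.
Proof.
have [n] := ubnP #|[set u | connect E u x]|; elim: n x => // n IHn x.
have [->|xr] := eqVneq x r; first by rewrite connect0.
move=> size_x; apply: connect_trans (fconnect1 f x) (IHn _ _).
have proper_fx : [set u | connect E u (f x)] \proper [set u | connect E u x].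
  apply/properP; split.
    apply/subsetP => u; rewrite !inE => /connect_trans; apply.
    exact/connect1/switching_arc.
  by exists x; rewrite !inE ?connect0 // arc_no_return ?switching_arc.
exact: leq_trans (proper_card proper_fx) size_x.
Qed.

Lemma fconnect_lca x y : exists m, [/\ fconnect f x m, fconnect f y m &
  forall t, fconnect f x t -> fconnect f y t -> fconnect f m t].
Proof.
have ex_n : exists n, fconnect f y (iter n f x).
  by exists (findex f x r); rewrite iter_findex ?fconnect_root.
have [n ymin min_n] := ex_minnP ex_n.
exists (iter n f x); split; rewrite ?fconnect_iter //.
move=> t /fconnectP [j <-] yt; apply/fconnectP; exists (j - n).
by rewrite -iterD subnK //; apply: min_n.
Qed.

Lemma orbit_until_path x m : fconnect f x m -> path E m (rev (orbit_until f x m)).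
Proof.
move=> xm; rewrite -{1}(iter_findex xm) /orbit_until.
have: forall i, i < findex f x m -> iter i f x != r.
  move=> i lt_i; apply: contra (iter_lt_findex lt_i) => /eqP xi_r.
  by rewrite -(iter_findex xm) -(subnK (ltnW lt_i)) iterD xi_r iter_switching_root.
elim: (findex f x m) => [|n IHn] // not_root.
rewrite trajectSr rev_rcons /= switching_arc ?not_root //=.
by apply: IHn => i /ltnW; apply: not_root.
Qed.

Lemma fconnect_parent v u : indeg E v = 1 -> E u v -> fconnect f v u.
Proof. by move=> in1 Euv; apply/fconnect1_eq/switching_indeg1. Qed.

Lemma fconnect_reticulation_leaf p b x : reticulation E p -> E p b -> is_leaf E b ->
  is_leaf E x -> fconnect f x p -> x = b.
Proof.
move=> /andP [_ /eqP out1] Epb lb lx xp.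
have [k [_ _ Epk xk]] := fconnect_child xp (leaf_not_tail lx Epb).
by rewrite (outdeg1_child out1 Epk Epb) in xk; apply: fconnect_leaf lb xk.
Qed.

Lemma ancestor_neq_leaf x y u : is_leaf E x -> fconnect f y u -> y != x -> u != x.
Proof.
move=> lx yu; apply: contraNneq => ux; apply/eqP/(fconnect_leaf lx).
by rewrite -ux.
Qed.

Lemma fconnect_via_parent x u v : indeg E x = 1 -> E u x ->
  fconnect f x v -> x != v -> fconnect f u v.
Proof. by move=> in1 Eux xv; rewrite -(switching_indeg1 in1 Eux); apply: fconnect_neq. Qed.

Lemma switching_reticulation w p q : reticulation E w -> E p w -> E q w -> p != q ->
  f w = p \/ f w = q.
Proof.
move=> rw Epw Eqw pq; apply: (reticulation_parent_cases rw Epw Eqw pq).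
by apply: switching_arc; apply: contraTneq Epw => ->; apply: root_no_parent.
Qed.

Lemma coparent_children_disjoint p q1 q2 z1 z2 l : reticulation E p ->
  E q1 p -> E q2 p -> q1 != q2 -> E q1 z1 -> E q2 z2 -> indeg E z1 = 1 -> indeg E z2 = 1 ->
  z1 != p -> z2 != p -> fconnect f l z1 -> fconnect f l z2 -> False.
Proof.
move=> rp E1 E2 q12 Ez1 Ez2 in1 in2 z1p z2p lz1 lz2.
have [z12|z12] := eqVneq z1 z2.
  by move: q12; rewrite z12 in Ez1; rewrite (indeg1_parent in2 Ez1 Ez2) eqxx.
case/orP: (fconnect_total lz1 lz2) => [z1z2|z2z1].
  move/negP: (no_shortcut_path rp E2 Ez2 z2p); apply.
  exact: connect_trans (fconnect_connect (fconnect_via_parent in1 Ez1 z1z2 z12)) (connect1 E1).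
move/negP: (no_shortcut_path rp E1 Ez1 z1p); apply.
have z21 : z2 != z1 by rewrite eq_sym.
exact: connect_trans (fconnect_connect (fconnect_via_parent in2 Ez2 z2z1 z21)) (connect1 E2).
Qed.

Lemma fconnect_below_children u k1 k2 x : E u k1 -> E u k2 -> k1 != k2 -> is_leaf E x ->
  fconnect f x u -> fconnect f x k1 \/ fconnect f x k2.
Proof.
move=> Ek1 Ek2 k12 lx xu; have [k [_ _ Euk xk]] := fconnect_child xu (leaf_not_tail lx Ek1).
by case: (child_cases Ek1 Ek2 k12 Euk) => ek; rewrite ek in xk; [left | right].
Qed.

Lemma not_fconnect_sibling x u w : indeg E x = 1 -> E u x -> E u w -> w != x -> ~~ fconnect f x w.
Proof.
move=> in1 Eux Euw wx; apply/negP => /fconnect_split [/eqP|]; first by rewrite (negbTE wx).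
by rewrite (switching_indeg1 in1 Eux); apply/negP/arc_not_fconnect.
Qed.

Lemma fconnect_above_branch u w x v : ~~ connect E w u -> fconnect f u v ->
  fconnect f x w -> fconnect f x v -> fconnect f w v.
Proof.
move=> wu uv xw xv; case/orP: (fconnect_total xw xv) => // vw.
by move/negP: wu; case; apply: connect_trans (fconnect_connect vw) (fconnect_connect uv).
Qed.

End Switching.

Definition default_switching v := odflt v [pick u | E u v].

Lemma switching_default : switching default_switching.
Proof.
rewrite /default_switching; split.
  by case: pickP => //= u Eur; move: (root_no_parent u); rewrite Eur.
move=> v vr; case: pickP => [//|noE].
by have [u Euv] := nonroot_parent vr; move: (noE u); rewrite Euv.
Qed.

Definition reroute (f : V -> V) t s v := if v == t then s else f v.

Lemma reroute_at f t s : reroute f t s t = s.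
Proof. by rewrite /reroute eqxx. Qed.

Lemma reroute_ne f t s v : v != t -> reroute f t s v = f v.
Proof. by rewrite /reroute => /negbTE ->. Qed.

Lemma switching_reroute f t s : switching f -> E s t -> switching (reroute f t s).
Proof.
move=> [fr fE] Est; have tr : t != r by apply: contraTneq Est => ->; apply: root_no_parent.
split; first by rewrite reroute_ne // eq_sym.
by move=> v vr; rewrite /reroute; case: eqP => [->|_] //; apply: fE.
Qed.

Lemma iter_reroute f g t s x n : (forall i, i < n -> iter i g x != t) ->
  g = f \/ g = reroute f t s -> iter n (reroute f t s) x = iter n f x.
Proof.
move=> avoid_t g_eq; elim: n avoid_t => [|n IHn] avoid_t //=.
have IH : iter n (reroute f t s) x = iter n f x by apply: IHn => i /ltnW/avoid_t.
rewrite IH reroute_ne //.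
by case: g_eq (avoid_t n (ltnSn n)) => ->; rewrite ?IH.
Qed.

Lemma fconnect_reroute f t s x u : ~~ fconnect f x t ->
  fconnect (reroute f t s) x u = fconnect f x u.
Proof.
move=> xt; have same n : iter n (reroute f t s) x = iter n f x.
  apply: (iter_reroute (g := f) (t := t) (s := s)) => [i _|]; last by left.
  by apply: contraNneq xt => <-; apply: fconnect_iter.
by apply/fconnectP/fconnectP => -[n <-]; exists n; rewrite same.
Qed.

Lemma fconnect_reroute_target f t s x :
  fconnect (reroute f t s) x t = fconnect f x t.
Proof.
apply/idP/idP => xt; apply/fconnectP.
  exists (findex (reroute f t s) x t).
  rewrite -(iter_reroute (t := t) (s := s) (g := reroute f t s)) ?iter_findex //; last by right.
  by move=> i /iter_lt_findex.
exists (findex f x t); rewrite (iter_reroute (g := f)) ?iter_findex //; last by left.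
by move=> i /iter_lt_findex.
Qed.

Inductive tree_descent : V -> V -> Prop :=
| tree_descent_refl x : is_leaf E x -> tree_descent x x
| tree_descent_step s s' x :
    E s s' -> indeg E s' = 1 -> tree_descent s' x -> tree_descent s x.

Lemma tree_descent_leaf s x : tree_descent s x -> is_leaf E x.
Proof. by elim. Qed.

Lemma tree_descent_fconnect f s x : switching f -> tree_descent s x -> fconnect f x s.
Proof.
move=> sw_f; elim=> [y _|s0 s' y Es in1 _ IH]; first exact: connect0.
by apply: connect_trans IH _; apply: fconnect1_eq; apply: switching_indeg1.
Qed.

Lemma tree_descent_parent s x : tree_descent s x -> x = s \/
  exists t, [/\ E t x, forall f, switching f -> fconnect f t s & t = s \/ indeg E t = 1].
Proof.
elim=> [y _|s0 s' y Es in1 _ [->|[t [Etx ts t_eq]]]]; first by left.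
  by right; exists s0; split; [|move=> f _; apply: connect0|left].
right; exists t; split => //; last by right; case: t_eq => // ->.
move=> f sw_f; apply: connect_trans (ts f sw_f) _.
exact/fconnect1_eq/switching_indeg1.
Qed.

Lemma tree_descent_exists s : exists x, tree_descent s x.
Proof.
have [n] := ubnP #|[set u | connect E s u]|; elim: n s => // n IHn s size_s.
have [ls|nls] := boolP (is_leaf E s); first by exists s; apply: tree_descent_refl.
have [w [Esw in1]] := tree_child_of nls.
have proper_w : [set u | connect E w u] \proper [set u | connect E s u].
  apply/properP; split.
    by apply/subsetP => u; rewrite !inE; apply: connect_trans; apply: connect1.
  by exists s; rewrite !inE ?connect0 // arc_no_return.
have [x wx] := IHn w (leq_trans (proper_card proper_w) size_s).
by exists x; apply: tree_descent_step wx.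
Qed.

(** * Triples and quads displayed by switchings *)

Definition sep3 (f : V -> V) (x y z : V) :=
  exists v, [/\ fconnect f x v, fconnect f y v & ~~ fconnect f z v].

Definition sep4 (f : V -> V) (x1 x2 x3 x4 : V) := exists v1 v2,
  [/\ fconnect f x1 v1, fconnect f x2 v1, ~~ fconnect f x3 v1 & ~~ fconnect f x4 v1] /\
  [/\ fconnect f x1 v2, fconnect f x2 v2, fconnect f x3 v2 & ~~ fconnect f x4 v2].

Lemma sep3C f x y z : sep3 f x y z -> sep3 f y x z.
Proof. by case=> v [xv yv zv]; exists v. Qed.

Lemma sep3_cases f x y z : switching f ->
  is_leaf E x -> is_leaf E y -> is_leaf E z -> x != y -> y != z -> x != z ->
  [\/ sep3 f x y z, sep3 f y z x | sep3 f x z y].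
Proof.
move=> sw_f lx ly lz xy yz xz.
have [m [xm ym min_m]] := fconnect_lca sw_f x y.
have [zm|] := boolP (fconnect f z m); last by constructor 1; exists m.
have [n [yn zn min_n]] := fconnect_lca sw_f y z.
have [xn|] := boolP (fconnect f x n); last by constructor 2; exists n.
have nm : n = m by apply: (fconnect_antisym sw_f); [apply: min_n | apply: min_m].
subst n.
have x_neq_m : x != m by apply: contraNneq xy => e; subst m; rewrite (fconnect_leaf sw_f lx ym).
have y_neq_m : y != m by apply: contraNneq xy => e; subst m; rewrite (fconnect_leaf sw_f ly xm).
have z_neq_m : z != m by apply: contraNneq yz => e; subst m; rewrite (fconnect_leaf sw_f lz ym).
have [kx [fkx kxm Emkx xkx]] := fconnect_child sw_f xm x_neq_m.
have [ky [fky kym Emky yky]] := fconnect_child sw_f ym y_neq_m.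
have [kz [fkz kzm Emkz zkz]] := fconnect_child sw_f zm z_neq_m.
have below_m k : f k = m -> k != m -> ~~ fconnect f m k.
  move=> fk /eqP km; apply/negP => mk.
  exact/km/(fconnect_antisym sw_f (fconnect1_eq fk) mk).
have kxy : kx != ky by apply: contraNneq (below_m _ fkx kxm) => e; rewrite min_m // e.
have kzy : kz != ky by apply: contraNneq (below_m _ fkz kzm) => e; rewrite min_n // e.
case: (child_cases Emkx Emky kxy Emkz) => [ezx|]; last by move/eqP; rewrite (negbTE kzy).
constructor 3; exists kx; split => //; first by rewrite -ezx.
by apply/negP => ykx; move/negP: (below_m _ fkx kxm); apply; apply: min_m.
Qed.

Lemma switching_of_paths (B : seq (V * seq V)) :
  (forall b, b \in B -> path E b.1 b.2) -> uniq (flatten (map snd B)) ->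
  exists f, switching f /\ forall b, b \in B -> path [rel u w | f w == u] b.1 b.2.
Proof.
move=> pathB uniqB; pose A := flatten [seq zip (b.1 :: b.2) b.2 | b <- B].
have EA u w : (u, w) \in A -> E u w.
  by case/flatten_mapP => b /pathB; rewrite path_zipE => /allP; apply.
have A2 : unzip2 A = flatten (map snd B).
  rewrite /unzip2 map_flatten -map_comp; congr flatten; apply: eq_map => b /=.
  by rewrite -/(unzip2 _) unzip2_zip /= ?leqnSn.
pose f v := if [pick u | (u, v) \in A] is Some u then u else default_switching v.
have fA u w : (u, w) \in A -> f w = u.
  move=> uwA; rewrite /f; case: pickP => [u' u'wA|/(_ u)]; last by rewrite uwA.
  by apply: (unzip2_inj _ u'wA uwA); rewrite A2.
exists f; split.
  have [dr dE] := switching_default.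
  split=> [|v vr]; rewrite /f; case: pickP => [u uvA|_] //.
  - by move: (root_no_parent u); rewrite EA.
  - exact: EA.
  - exact: dE.
move=> b bB; rewrite path_zipE; apply/allP => -[u w] uwA; apply/eqP/fA.
by apply/flatten_mapP; exists b.
Qed.

Lemma descending_fconnect (f : V -> V) s q t :
  path [rel u w | f w == u] s (rcons q t) -> fconnect f t s.
Proof.
elim: q s => [|w q IHq] s /=; first by rewrite andbT => /eqP /fconnect1_eq.
by case/andP => /eqP fws /IHq tw; apply: connect_trans tw (fconnect1_eq fws).
Qed.

Lemma descending_ancestor (f : V -> V) s p v : path [rel u w | f w == u] s p ->
  fconnect f (last s p) v -> v \in p \/ fconnect f s v.
Proof.
elim: p s => [|w p IHp] s /=; first by right.
case/andP => /eqP fws /IHp wv /wv [vp|]; first by left; rewrite inE vp orbT.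
case/fconnect_split => [->|]; first by left; rewrite mem_head.
by rewrite fws; right.
Qed.

Lemma descending_not_fconnect (f : V -> V) s q t v : switching f ->
  path [rel u w | f w == u] s (rcons q t) -> v \notin rcons q t -> v != s ->
  fconnect f v s -> ~~ fconnect f t v.
Proof.
move=> sw_f sqt vq vs v_s; apply/negP => tv.
have := descending_ancestor sqt; rewrite last_rcons => /(_ _ tv) [|s_v].
  by apply/negP.
by move: vs; rewrite (fconnect_antisym sw_f v_s s_v) eqxx.
Qed.

Lemma caterpillar_switching xs : displays_caterpillar E xs ->
  exists f (phi : nat -> V) (P : nat -> nat -> seq V),
  [/\ switching f, map phi (iota 0 (size xs)) = xs,
      forall u v, u < 2 * size xs - 1 -> v < 2 * size xs - 1 ->
        (phi u == phi v) = (u == v),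
      forall s t u, (s, t) \in cat_arcs (size xs) -> u < 2 * size xs - 1 ->
        (phi u \in rcons (P s t) (phi t)) = (u == t) &
      forall s t, (s, t) \in cat_arcs (size xs) ->
        path [rel u w | f w == u] (phi s) (rcons (P s t) (phi t))].
Proof.
case=> n2 _ _ [phi [P [phi_xs pathP uniqP]]]; set n := size xs in n2 phi_xs pathP uniqP *.
pose G st := rcons (P st.1 st.2) (phi st.2).
have GP : {in cat_arcs n, forall st, perm_eq (G st) (phi st.2 :: P st.1 st.2)}.
  by move=> st _; rewrite perm_rcons.
have [f [sw_f fpath]] : exists f, switching f /\ forall b,
    b \in [seq (phi st.1, G st) | st <- cat_arcs n] -> path [rel u w | f w == u] b.1 b.2.
  apply: switching_of_paths => [b /mapP [[s t] st ->]|]; first exact: pathP.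
  move: uniqP; rewrite -(uniq_caterpillar_nodes n2 GP) -map_comp cat_uniq.
  by case/andP.
have arc_lt s t : (s, t) \in cat_arcs n -> t < 2 * n - 1.
  move=> st; have : t \in iota 0 (2 * n - 1).
    by rewrite -(perm_mem (cat_arcs_snd n2)) mem_cat (map_f snd st).
  by rewrite mem_iota.
move: uniqP; rewrite cat_uniq => /and3P [_ /hasPn notinP /mkseq_uniqP phi_inj].
exists f, phi, P; split => //.
- by move=> u v lt_u lt_v; apply/eqP/eqP => [/(phi_inj u v lt_u lt_v)|->].
- move=> s t u st lt_u; rewrite mem_rcons inE.
  have [->|ut] := eqVneq u t; first by rewrite eqxx.
  have -> : (phi u == phi t) = false.
    by apply/eqP => /(phi_inj u t lt_u (arc_lt _ _ st)) /eqP; rewrite (negbTE ut).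
  have u_node : phi u \in map phi (iota 0 (2 * n - 1)) by rewrite map_f // mem_iota.
  apply/negbTE/negP => uP; move/negP: (notinP _ u_node); apply.
  by apply/flatten_mapP; exists (s, t).
- move=> s t st; apply: (fpath (phi s, G (s, t))).
  exact: (map_f (fun st => (phi st.1, G st)) st).
Qed.

Lemma triple_in_sep3 x y z :
  triple_in E x y z -> exists f, switching f /\ sep3 f x y z.
Proof.
case/caterpillar_switching => f [phi [P [sw_f /= [<- <- <-] phi_eq phi_mem fpath]]].
exists f; split => //; exists (phi 3); split.
- exact: descending_fconnect (fpath 3 0 isT).
- exact: descending_fconnect (fpath 3 1 isT).
apply: (descending_not_fconnect sw_f (fpath 4 2 isT)); rewrite ?phi_eq ?phi_mem //.
exact: descending_fconnect (fpath 4 3 isT).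
Qed.

Lemma quad_in_sep4 x1 x2 x3 x4 :
  quad_in E x1 x2 x3 x4 -> exists f, switching f /\ sep4 f x1 x2 x3 x4.
Proof.
case/caterpillar_switching => f [phi [P [sw_f /= [<- <- <- <-] phi_eq phi_mem fpath]]].
have up s t : (s, t) \in cat_arcs 4 -> fconnect f (phi t) (phi s).
  by move/fpath/descending_fconnect.
have m1m2 := up 5 4 isT; have m2m3 := up 6 5 isT.
exists f; split => //; exists (phi 4), (phi 5); split; split.
- exact: up 4 0 isT.
- exact: up 4 1 isT.
- by apply: (descending_not_fconnect sw_f (fpath 5 2 isT)); rewrite ?phi_eq ?phi_mem.
- apply: (descending_not_fconnect sw_f (fpath 6 3 isT)); rewrite ?phi_eq ?phi_mem //.
  exact: connect_trans m1m2 m2m3.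
- exact: connect_trans (up 4 0 isT) m1m2.
- exact: connect_trans (up 4 1 isT) m1m2.
- exact: up 5 2 isT.
- by apply: (descending_not_fconnect sw_f (fpath 6 3 isT)); rewrite ?phi_eq ?phi_mem.
Qed.

Lemma switching_caterpillar f (phi : nat -> V) xs : switching f -> 2 <= size xs -> uniq xs ->
  all (fun x => x \in leaves E) xs -> map phi (iota 0 (size xs)) = xs ->
  {in cat_arcs (size xs), forall st, fconnect f (phi st.2) (phi st.1) /\ phi st.2 != phi st.1} ->
  uniq (flatten [seq orbit_until f (phi st.2) (phi st.1) | st <- cat_arcs (size xs)]
        ++ [:: phi (2 * size xs - 2)]) ->
  displays_caterpillar E xs.
Proof.
move=> sw_f n2 uxs lxs phi_xs arcs_f uniq_orbits; split => //.
exists phi, (fun s t => rev (behead (orbit_until f (phi t) (phi s)))); split => //.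
  move=> s t /arcs_f [ts tns]; rewrite -rev_cons -orbit_until_cons //.
  exact: orbit_until_path.
rewrite -(uniq_caterpillar_nodes n2 (P := fun s t => rev (behead (orbit_until f (phi t) (phi s))))
  (G := fun st => orbit_until f (phi st.2) (phi st.1))) // => -[s t] /arcs_f [_ tns].
by rewrite /= {1}orbit_until_cons // perm_cons perm_sym perm_rev.
Qed.

Definition meets_above (f : V -> V) u v m :=
  forall t, fconnect f u t -> fconnect f v t -> fconnect f m t.

Lemma meets_above_anc f u v m : fconnect f m v -> meets_above f u v m.
Proof. by move=> mv t _; apply: connect_trans. Qed.

Lemma meets_above_total f u v m : fconnect f u m -> ~~ fconnect f v m -> meets_above f u v m.
Proof.
move=> um vm t ut vt; case/orP: (fconnect_total um ut) => // tm.
by move: vm; rewrite (connect_trans vt tm).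
Qed.

(* The orbit segments [u -> m] of [L], followed by [top], are pairwise disjoint
   as soon as every common ancestor of a start [u] and of a later start lies
   above the end [m] of the earlier segment. *)
Fixpoint nested_orbits (f : V -> V) (L : seq (V * V)) top : Prop :=
  if L is (u, m) :: L' then
    [/\ fconnect f u m,
        foldr (fun vm P => meets_above f u vm.1 m /\ P) (meets_above f u top m) L'
      & nested_orbits f L' top]
  else True.

Lemma uniq_nested_orbits f L top : switching f -> nested_orbits f L top ->
  uniq (flatten [seq orbit_until f um.1 um.2 | um <- L] ++ [:: top]).
Proof.
move=> sw_f; elim: L => [|[u m] L IHL] //= [um meets /IHL uniqL].
rewrite -catA cat_uniq orbit_until_uniq uniqL andbT /=; apply/hasPn => t t_rest.
suff [v [v_meets vt]] : exists v, meets_above f u v m /\ fconnect f v t.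
  apply/negP => /[dup] /mem_orbit_until ut /(mem_orbit_until_below um) [tm].
  by rewrite (fconnect_antisym sw_f tm (v_meets t ut vt)) eqxx.
elim: L meets t_rest {IHL uniqL} => [|[v m'] L IHL] /=.
  by move=> top_meets; rewrite inE => /eqP ->; exists top; rewrite connect0.
case=> v_meets meets; rewrite -catA mem_cat => /orP [vt|]; last exact: IHL.
by exists v; split; last exact: mem_orbit_until vt.
Qed.

Ltac meets_above_tac :=
  first [ done | by apply: meets_above_anc; rewrite ?connect0
        | by apply: meets_above_total ].

Lemma sep3_triple_in f x y z : switching f -> uniq [:: x; y; z] ->
  all (fun x => x \in leaves E) [:: x; y; z] -> sep3 f x y z -> triple_in E x y z.
Proof.
move=> sw_f uxyz lxyz [v [xv yv zv]].
have /and3P [lx ly lz] : [&& is_leaf E x, is_leaf E y & is_leaf E z].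
  by move: lxyz; rewrite /= !inE andbT.
move: (uxyz); rewrite uniq3 => /and3P [xy xz yz].
have [m1 [xm1 ym1 min1]] := fconnect_lca sw_f x y.
have [m2 [m1m2 zm2 min2]] := fconnect_lca sw_f m1 z.
have z_m1 : ~~ fconnect f z m1 by apply: contra zv => /connect_trans; apply; apply: min1.
have m1m2' : m1 != m2 by apply: contraNneq z_m1 => ->.
have xm2 := connect_trans xm1 m1m2.
apply: (switching_caterpillar (f := f) (phi := nth x [:: x; y; z; m1; m2])) => //.
  have -> : cat_arcs (size [:: x; y; z]) = [:: (3, 0); (3, 1); (4, 3); (4, 2)] by [].
  move=> st; rewrite !inE => /or4P [] /eqP -> /=; split => //.
  - by rewrite eq_sym (ancestor_neq_leaf sw_f lx ym1) // eq_sym.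
  - by rewrite eq_sym (ancestor_neq_leaf sw_f ly xm1).
  - by rewrite eq_sym (ancestor_neq_leaf sw_f lz xm2).
apply: (@uniq_nested_orbits f [:: (x, m1); (y, m1); (m1, m2); (z, m2)] m2) => //=.
by repeat split; meets_above_tac.
Qed.

Lemma sep4_quad_in f x1 x2 x3 x4 : switching f -> uniq [:: x1; x2; x3; x4] ->
  all (fun x => x \in leaves E) [:: x1; x2; x3; x4] -> sep4 f x1 x2 x3 x4 ->
  quad_in E x1 x2 x3 x4.
Proof.
move=> sw_f u1234 l1234 [v1 [v2 [[x1v1 x2v1 x3v1 x4v1] [x1v2 x2v2 x3v2 x4v2]]]].
have /and4P [l1 l2 l3 l4] : [&& is_leaf E x1, is_leaf E x2, is_leaf E x3 & is_leaf E x4].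
  by move: l1234; rewrite /= !inE andbT.
have [x12 x13 x14] : [/\ x1 != x2, x1 != x3 & x1 != x4].
  by move: u1234; rewrite /= !inE !negb_or => /andP [/and3P []].
have [m1 [x1m1 x2m1 min1]] := fconnect_lca sw_f x1 x2.
have [m2 [m1m2 x3m2 min2]] := fconnect_lca sw_f m1 x3.
have [m3 [m2m3 x4m3 min3]] := fconnect_lca sw_f m2 x4.
have m1v1 := min1 _ x1v1 x2v1; have m2v2 := min2 _ (min1 _ x1v2 x2v2) x3v2.
have x3_m1 : ~~ fconnect f x3 m1 by apply: contra x3v1 => /connect_trans; apply.
have x4_m1 : ~~ fconnect f x4 m1 by apply: contra x4v1 => /connect_trans; apply.
have x4_m2 : ~~ fconnect f x4 m2 by apply: contra x4v2 => /connect_trans; apply.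
have m1m3 := connect_trans m1m2 m2m3.
apply: (switching_caterpillar (f := f) (phi := nth x1 [:: x1; x2; x3; x4; m1; m2; m3])) => //.
  have -> : cat_arcs (size [:: x1; x2; x3; x4]) =
    [:: (4, 0); (4, 1); (5, 4); (5, 2); (6, 5); (6, 3)] by [].
  move=> st; rewrite !inE => /or4P [| | |/or3P [| |]] /eqP -> /=; split => //.
  - by rewrite eq_sym (ancestor_neq_leaf sw_f l1 x2m1) // eq_sym.
  - by rewrite eq_sym (ancestor_neq_leaf sw_f l2 x1m1).
  - by apply: contraNneq x3_m1 => ->.
  - by rewrite eq_sym (ancestor_neq_leaf sw_f l3 (connect_trans x1m1 m1m2)).
  - by apply: contraNneq x4_m2 => ->.
  - by rewrite eq_sym (ancestor_neq_leaf sw_f l4 (connect_trans x1m1 m1m3)).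
apply: (@uniq_nested_orbits f
  [:: (x1, m1); (x2, m1); (m1, m2); (x3, m2); (m2, m3); (x4, m3)] m3) => //=.
by repeat split; meets_above_tac.
Qed.

Definition triple_sw x y z := exists f, switching f /\ sep3 f x y z.
Definition quad_sw x1 x2 x3 x4 := exists f, switching f /\ sep4 f x1 x2 x3 x4.

Lemma triple_swC x y z : triple_sw x y z -> triple_sw y x z.
Proof. by case=> f [sw_f /sep3C]; exists f. Qed.

Lemma triple_inP x y z : x \in leaves E -> y \in leaves E -> z \in leaves E ->
  uniq [:: x; y; z] -> triple_in E x y z <-> triple_sw x y z.
Proof.
move=> lx ly lz uxyz; split=> [/triple_in_sep3 //|[f [sw_f]]].
by apply: sep3_triple_in => //=; rewrite lx ly lz.
Qed.

Lemma quad_inP x1 x2 x3 x4 : x1 \in leaves E -> x2 \in leaves E -> x3 \in leaves E ->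
  x4 \in leaves E -> uniq [:: x1; x2; x3; x4] -> quad_in E x1 x2 x3 x4 <-> quad_sw x1 x2 x3 x4.
Proof.
move=> l1 l2 l3 l4 u1234; split=> [/quad_in_sep4 //|[f [sw_f]]].
by apply: sep4_quad_in => //=; rewrite l1 l2 l3 l4.
Qed.

(* Conditions (i)-(iii) of the theorem, in terms of switchings. *)
Definition drc_conditions a b c :=
  [/\ [/\ forall x, is_leaf E x -> x != a -> x != b -> triple_sw a b x,
          forall x, is_leaf E x -> x != b -> x != c -> triple_sw b c x &
          ~ triple_sw a c b],
      forall x, is_leaf E x -> x != a -> x != b -> x != c ->
        ~ [\/ quad_sw x b a c, quad_sw x b c a, quad_sw x a b c | quad_sw x c b a] &
      forall x, is_leaf E x -> x != a -> x != b -> x != c -> triple_sw a c x ->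
        quad_sw a b c x /\ quad_sw c b a x].

(** * The conditions are necessary *)

Section Forward.
Variables a b c pa pb pc : V.
Hypotheses (la : is_leaf E a) (lb : is_leaf E b) (lc : is_leaf E c)
  (ab : a != b) (cb : c != b) (ca : c != a)
  (Ea : E pa a) (Eb : E pb b) (Ec : E pc c) (Eab : E pa pb) (Ecb : E pc pb)
  (rb : reticulation E pb).

Lemma leaves_below_cherry f y py x : switching f -> is_leaf E y -> E py y -> E py pb ->
  is_leaf E x -> fconnect f x py -> (x == y) || (x == b).
Proof.
move=> sw_f ly Ey Eyb lx.
case/(fconnect_below_children sw_f Ey Eyb (leaf_not_tail ly Eb) lx) => [xy|xpb].
  by rewrite (fconnect_leaf sw_f ly xy) eqxx.
by rewrite (fconnect_reticulation_leaf sw_f rb Eb lb lx xpb) eqxx orbT.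
Qed.

Lemma cherry_triple y py x : is_leaf E y -> E py y -> E py pb -> is_leaf E x ->
  x != y -> x != b -> triple_sw y b x.
Proof.
move=> ly Ey Eyb lx xy xb.
have sw_g := switching_reroute switching_default Eyb.
exists (reroute default_switching pb py); split => //; exists py; split.
- exact: (fconnect_parent sw_g (leaf_indeg ly) Ey).
- apply: connect_trans (fconnect_parent sw_g (leaf_indeg lb) Eb) _.
  by apply: fconnect1_eq; rewrite reroute_at.
by apply/negP => /(leaves_below_cherry sw_g ly Ey Eyb lx); rewrite (negbTE xy) (negbTE xb).
Qed.

Lemma cherry_parents_neq : pa != pc.
Proof.
apply/eqP => pac; move: Ec; rewrite -pac => Eac.
case: (child_cases Ea Eab (leaf_not_tail la Eb) Eac) => ec.
  by move: ca; rewrite ec eqxx.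
by move: (leaf_not_tail lc Eb); rewrite ec eqxx.
Qed.

Lemma above_leaf_and_b f x v : switching f -> is_leaf E x -> x != b ->
  fconnect f x v -> fconnect f b v -> fconnect f (f pb) v.
Proof.
move=> sw_f lx xb xv bv.
have b_neq_v : b != v by rewrite eq_sym (ancestor_neq_leaf sw_f lb xv xb).
have pb_neq_v : pb != v.
  apply: contraNneq xb => pbv; apply/eqP/(fconnect_reticulation_leaf sw_f rb Eb lb lx).
  by rewrite pbv.
exact: fconnect_neq (fconnect_via_parent sw_f (leaf_indeg lb) Eb bv b_neq_v) pb_neq_v.
Qed.

Lemma b_below_routed f y py v : switching f -> is_leaf E y -> E py y -> f pb = py ->
  fconnect f y v -> y != v -> fconnect f b v.
Proof.
move=> sw_f ly Ey fpb yv y_neq_v.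
apply: connect_trans (fconnect_parent sw_f (leaf_indeg lb) Eb) (connect_trans (fconnect1 f pb) _).
by rewrite fpb (fconnect_via_parent sw_f (leaf_indeg ly) Ey yv y_neq_v).
Qed.

Lemma not_triple_acb : ~ triple_sw a c b.
Proof.
case=> f [sw_f [v [av cv /negP []]]].
case: (switching_reticulation sw_f rb Eab Ecb cherry_parents_neq) => fpb.
  apply: (b_below_routed sw_f la Ea fpb av).
  by rewrite eq_sym (ancestor_neq_leaf sw_f la cv).
apply: (b_below_routed sw_f lc Ec fpb cv).
by rewrite eq_sym (ancestor_neq_leaf sw_f lc av) // eq_sym.
Qed.

Lemma not_quad_xbac x : is_leaf E x -> x != b -> ~ quad_sw x b a c.
Proof.
move=> lx xb [f [sw_f [v1 [_ [[xv bv av cv] _]]]]].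
have pv := above_leaf_and_b sw_f lx xb xv bv.
have a_pa := fconnect_parent sw_f (leaf_indeg la) Ea.
have c_pc := fconnect_parent sw_f (leaf_indeg lc) Ec.
case: (switching_reticulation sw_f rb Eab Ecb cherry_parents_neq) pv => -> pv.
  by rewrite (connect_trans a_pa pv) in av.
by rewrite (connect_trans c_pc pv) in cv.
Qed.

Lemma not_quad_xabc x : is_leaf E x -> x != a -> x != b -> ~ quad_sw x a b c.
Proof.
move=> lx xa xb [f [sw_f [v1 [v2 [[xv1 av1 bv1 _] [xv2 _ bv2 cv2]]]]]].
case: (switching_reticulation sw_f rb Eab Ecb cherry_parents_neq) => fpb.
  move/negP: bv1; apply; apply: (b_below_routed sw_f la Ea fpb av1).
  by rewrite eq_sym (ancestor_neq_leaf sw_f la xv1).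
move/negP: cv2; apply; apply: connect_trans (fconnect_parent sw_f (leaf_indeg lc) Ec) _.
by rewrite -fpb; apply: (above_leaf_and_b sw_f lx xb xv2 bv2).
Qed.

(* Rerouting pb through pa leaves the ancestors of the other leaves unchanged
   and makes pa the lowest common ancestor of a and b. *)
Lemma cherry_quad x : is_leaf E x -> x != a -> x != b -> x != c ->
  triple_sw a c x -> quad_sw a b c x.
Proof.
move=> lx xa xb xc [f [sw_f [v [av cv xv]]]].
have sw_g := switching_reroute sw_f Eab; set g := reroute f pb pa in sw_g *.
have same y u : is_leaf E y -> y != b -> fconnect g y u = fconnect f y u.
  move=> ly yb; apply: fconnect_reroute; apply: contra yb => y_pb.
  by rewrite (fconnect_reticulation_leaf sw_f rb Eb lb ly y_pb).
have b_pa : fconnect g b pa.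
  apply: connect_trans (fconnect_parent sw_g (leaf_indeg lb) Eb) _.
  by apply: fconnect1_eq; rewrite /g reroute_at.
have not_below_pa y : is_leaf E y -> y != a -> y != b -> ~~ fconnect g y pa.
  move=> ly ya yb; apply/negP => /(leaves_below_cherry sw_g la Ea Eab ly).
  by rewrite (negbTE ya) (negbTE yb).
have av_g : fconnect g a v by rewrite same.
exists g; split => //; exists pa, v; split; split => //.
- exact: (fconnect_parent sw_g (leaf_indeg la) Ea).
- by apply: not_below_pa; rewrite // eq_sym.
- exact: not_below_pa.
- apply: connect_trans b_pa _; rewrite -(switching_indeg1 sw_g (leaf_indeg la) Ea).
  by apply: fconnect_neq av_g _; rewrite eq_sym (ancestor_neq_leaf sw_f la cv).
- by rewrite same // eq_sym.
- by rewrite same.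
Qed.

End Forward.

Lemma drc_forward a b c : is_leaf E a -> is_leaf E b -> is_leaf E c ->
  a != b -> b != c -> a != c -> double_reticulated_cherry E a b c -> drc_conditions a b c.
Proof.
move=> la lb lc ab bc ac [[pa [pb [Ea Eb rb Eab]]] [pc [pb' [Ec Eb' _ Ecb]]]].
rewrite (indeg1_parent (leaf_indeg lb) Eb' Eb) in Ecb.
have [ca cb] : c != a /\ c != b by rewrite !(eq_sym c).
split; first split.
- by move=> x lx xa xb; apply: (cherry_triple lb Eb rb la Ea Eab lx xa xb).
- by move=> x lx xb xc; apply/triple_swC/(cherry_triple lb Eb rb lc Ec Ecb lx xc xb).
- exact: (not_triple_acb la lb lc ca Ea Eb Ec Eab Ecb rb).
- move=> x lx xa xb xc; case.
  + exact: (not_quad_xbac la lb lc ca Ea Eb Ec Eab Ecb rb lx xb).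
  + exact: (not_quad_xbac lc lb la ac Ec Eb Ea Ecb Eab rb lx xb).
  + exact: (not_quad_xabc la lb lc ca Ea Eb Ec Eab Ecb rb lx xa xb).
  + exact: (not_quad_xabc lc lb la ac Ec Eb Ea Ecb Eab rb lx xc xb).
- move=> x lx xa xb xc acx; split.
  + exact: (cherry_quad la lb lc ab cb ca Ea Eb Eab rb lx xa xb xc acx).
  + exact: (cherry_quad lc lb la cb ab ac Ec Eb Ecb rb lx xc xb xa (triple_swC acx)).
Qed.

(** * The conditions are sufficient *)

Lemma drc_conditions_sym a b c : drc_conditions a b c -> drc_conditions c b a.
Proof.
case=> -[ab_x bc_x not_acb] no_quad ac_quads; split; first split.
- by move=> x lx xc xb; apply/triple_swC/bc_x.
- by move=> x lx xb xa; apply/triple_swC/ab_x.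
- by move/triple_swC.
- move=> x lx xc xb xa quads; apply: (no_quad x lx xa xb xc).
  by case: quads; [constructor 2 | constructor 1 | constructor 4 | constructor 3].
- by move=> x lx xc xb xa /triple_swC /(ac_quads x lx xa xb xc) [q1 q2]; split.
Qed.

Section Backward.
Variables a b c : V.
Hypotheses (la : is_leaf E a) (lb : is_leaf E b) (lc : is_leaf E c)
  (ab : a != b) (bc : b != c) (ac : a != c) (conds : drc_conditions a b c).

(* Whatever the relative position of a, b and c in f, the leaf y completes one
   of the quads excluded by (ii), or f displays ac|b. *)
Lemma forbidden_config f h g y : switching f -> is_leaf E y -> y != a -> y != b -> y != c ->
  fconnect f b h -> fconnect f y g -> fconnect f g h -> ~~ fconnect f a h -> ~~ fconnect f b g ->
  (forall x, is_leaf E x -> fconnect f x h -> x = b \/ fconnect f x g) -> False.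
Proof.
move=> sw_f ly ya yb yc bh yg gh ah bg below_h.
have [[_ _ not_acb] no_quad _] := conds; have yh := connect_trans yg gh.
apply: (no_quad y ly ya yb yc).
case: (sep3_cases sw_f la lb lc ab bc ac) => [[u [au bu cu]]|[u [bu cu au]]|acb].
- have hu : fconnect f h u.
    case/orP: (fconnect_total bh bu) => // uh.
    by rewrite (connect_trans au uh) in ah.
  constructor 1; exists f; split => //; exists h, u; split; split => //.
  - by apply: contra cu => ch; apply: connect_trans ch hu.
  - exact: connect_trans yh hu.
- have [ch|ch] := boolP (fconnect f c h).
    have cg : fconnect f c g by case: (below_h c lc ch) => // cb; move: bc; rewrite cb eqxx.
    constructor 4; exists f; split => //; exists g, h; split; split => //.
    by apply: contra ah => ag; apply: connect_trans ag gh.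
  have hu : fconnect f h u.
    case/orP: (fconnect_total bh bu) => // uh.
    by rewrite (connect_trans cu uh) in ch.
  constructor 2; exists f; split => //; exists h, u; split; split => //.
  exact: connect_trans yh hu.
- by case: not_acb; exists f.
Qed.

Lemma sibling_reticulation p w : E p b -> E p w -> w != b -> reticulation E w.
Proof.
move=> Epb Epw wb; apply/negPn/negP => nrw.
have [[ab_x bc_x _] _ _] := conds.
have w_in1 : indeg E w = 1.
  have wr : w != r by apply: contraTneq Epw => ->; apply: root_no_parent.
  by case/or3P: (vertex_kind wr) nrw => [/andP [/eqP -> _]|/andP [/eqP -> _]|->].
have [y wy] := tree_descent_exists w; have ly := tree_descent_leaf wy.
have yb : y != b.
  apply: contraNneq (not_fconnect_sibling switching_default (leaf_indeg lb) Epb Epw wb) => <-.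
  exact: tree_descent_fconnect switching_default wy.
have no_sep f x : switching f -> is_leaf E x -> x != b -> sep3 f b x y -> False.
  move=> sw_f lx xb [v [bv xv /negP []]].
  have pv : fconnect f p v.
    apply: (fconnect_via_parent sw_f (leaf_indeg lb) Epb bv).
    by rewrite eq_sym (ancestor_neq_leaf sw_f lb xv xb).
  apply: connect_trans (tree_descent_fconnect sw_f wy) _.
  exact: connect_trans (fconnect_parent sw_f w_in1 Epw) pv.
have [ya|ya] := eqVneq y a.
  have [f [sw_f]] := bc_x a la ab ac; rewrite -ya; apply: (no_sep f c sw_f lc).
  by rewrite eq_sym bc.
have [yc|yc] := eqVneq y c.
  have [ca cb] : c != a /\ c != b by rewrite !(eq_sym c).
  have [f [sw_f /sep3C]] := ab_x c lc ca cb.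
  by rewrite -yc; apply: (no_sep f a sw_f la ab).
have [f [sw_f /sep3C]] := ab_x y ly ya yb.
exact: (no_sep f a sw_f la ab).
Qed.


Lemma sibling_descent_ac p w y : E p b -> E p w -> w != b -> tree_descent w y ->
  (y == a) || (y == c).
Proof.
move=> Epb Epw wb wy; apply/norP => -[ya yc]; have ly := tree_descent_leaf wy.
have [[ab_x _ _] _ _] := conds.
have b_w f : switching f -> ~~ fconnect f b w.
  by move=> sw_f; apply: (not_fconnect_sibling sw_f (leaf_indeg lb) Epb Epw wb).
have yb : y != b.
  apply: contraNneq (b_w _ switching_default) => <-.
  exact: (tree_descent_fconnect switching_default wy).
have [f [sw_f [v [av bv yv]]]] := ab_x y ly ya yb.
have pv : fconnect f p v.
  apply: (fconnect_via_parent sw_f (leaf_indeg lb) Epb bv).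
  by rewrite eq_sym (ancestor_neq_leaf sw_f lb av ab).
have aw : ~~ fconnect f a w.
  apply/negP => aw; have wv := fconnect_above_branch sw_f (arc_no_return Epw) pv aw av.
  by rewrite (connect_trans (tree_descent_fconnect sw_f wy) wv) in yv.
have sw_g := switching_reroute sw_f Epw; set g := reroute f w p in sw_g *.
have below_p x : is_leaf E x -> fconnect g x p -> x = b \/ fconnect g x w.
  have bw : b != w by rewrite eq_sym.
  move=> lx /(fconnect_below_children sw_g Epb Epw bw lx) [xb|]; last by right.
  by left; apply: (fconnect_leaf sw_g lb xb).
apply: (forbidden_config (h := p) (g := w) sw_g ly ya yb yc).
- exact: (fconnect_parent sw_g (leaf_indeg lb) Epb).
- exact: (tree_descent_fconnect sw_g wy).
- by apply: fconnect1_eq; rewrite /g reroute_at.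
- apply/negP => /(below_p a la) [/eqP|]; first by rewrite (negbTE ab).
  by rewrite /g fconnect_reroute_target (negbTE aw).
- exact: b_w.
- exact: below_p.
Qed.

Section SiblingReticulation.
Variables p w q z d : V.
Hypotheses (Epb : E p b) (Epw : E p w) (rw : reticulation E w) (wa : tree_descent w a)
  (Eqw : E q w) (qp : q != p) (Eqz : E q z) (z_in1 : indeg E z = 1) (zd : tree_descent z d).

Lemma no_path_z_w : ~~ connect E z w.
Proof.
apply: (no_shortcut_path rw Eqw Eqz); apply/eqP => zw.
by move: rw; rewrite /reticulation -zw z_in1.
Qed.

Lemma no_path_z_p : ~~ connect E z p.
Proof. by apply: contra no_path_z_w => zp; apply: connect_trans zp (connect1 Epw). Qed.

Lemma not_below_w_and_z f l : switching f -> fconnect f l w -> fconnect f l z -> False.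
Proof.
move=> sw_f lw lz; have zw : z != w.
  by apply: contraNneq no_path_z_w => ->; apply: connect0.
case/orP: (fconnect_total lw lz) => [wz|zw'].
  by move/negP: no_path_z_w; apply; apply: (fconnect_connect sw_f wz).
move/negP: (arc_not_fconnect sw_f Eqw); apply.
exact: (fconnect_via_parent sw_f z_in1 Eqz zw' zw).
Qed.

Lemma switching_sibling_parent f v : switching f -> fconnect f p v -> ~~ fconnect f a v ->
  f w = q.
Proof.
move=> sw_f pv av; have pq : p != q by rewrite eq_sym.
case: (switching_reticulation sw_f rw Epw Eqw pq) => // fwp.
have aw := tree_descent_fconnect sw_f wa.
by rewrite (connect_trans aw (connect_trans (fconnect1_eq fwp) pv)) in av.
Qed.

(* Rerouting w through p turns the triple bc|a into ac|d. *)
Lemma sibling_triple_acd : [/\ triple_sw a c d, d != a, d != b & d != c].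
Proof.
have [[_ bc_x _] _ _] := conds.
have [f [sw_f [v [bv cv av]]]] := bc_x a la ab ac.
have pv : fconnect f p v.
  apply: (fconnect_via_parent sw_f (leaf_indeg lb) Epb bv).
  by rewrite eq_sym (ancestor_neq_leaf sw_f lb cv) // eq_sym.
have fw := switching_sibling_parent sw_f pv av.
have z_not_v l : fconnect f l z -> ~~ fconnect f l v.
  move=> lz; apply/negP => lv.
  have zv := fconnect_above_branch sw_f no_path_z_p pv lz lv.
  have [zv'|zv'] := eqVneq z v.
    by move/negP: no_path_z_p; apply; rewrite zv' (fconnect_connect sw_f pv).
  move/negP: av; apply; apply: connect_trans (tree_descent_fconnect sw_f wa) _.
  by apply: connect_trans (fconnect1_eq fw) (fconnect_via_parent sw_f z_in1 Eqz zv zv').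
have dz g : switching g -> fconnect g d z by move=> sw_g; apply: tree_descent_fconnect zd.
have dc : d != c by apply: contraTneq cv => <-; apply: z_not_v (dz f sw_f).
have da : d != a.
  apply/eqP => da; apply: (not_below_w_and_z switching_default).
    exact: tree_descent_fconnect switching_default wa.
  by rewrite -da; apply: dz switching_default.
have db : d != b.
  apply/eqP => db; have := dz _ switching_default; rewrite db.
  case/fconnect_split => [zb|].
    by move: Eqz qp; rewrite zb => /(indeg1_parent (leaf_indeg lb))/(_ Epb) ->; rewrite eqxx.
  rewrite (switching_indeg1 switching_default (leaf_indeg lb) Epb).
  by move/(fconnect_connect switching_default); apply/negP: no_path_z_p.
have cw : ~~ fconnect f c w.
  apply/negP => cw; have wv := fconnect_above_branch sw_f (arc_no_return Epw) pv cw cv.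
  by rewrite (connect_trans (tree_descent_fconnect sw_f wa) wv) in av.
have dw : ~~ fconnect f d w by apply/negP => dw; apply: (not_below_w_and_z sw_f dw (dz f sw_f)).
have sw_g := switching_reroute sw_f Epw.
split => //; exists (reroute f w p); split => //; exists v; split.
- apply: connect_trans (tree_descent_fconnect sw_g wa) _.
  apply: connect_trans (fconnect1_eq (reroute_at f w p)) _.
  by rewrite fconnect_reroute // arc_not_fconnect.
- by rewrite fconnect_reroute.
- by rewrite fconnect_reroute // z_not_v // dz.
Qed.

Lemma sibling_no_quad_cbad : ~ quad_sw c b a d.
Proof.
case=> f [sw_f [v1 [v2 [[cv1 bv1 av1 _] [cv2 bv2 av2 dv2]]]]].
have p_above v : fconnect f c v -> fconnect f b v -> fconnect f p v.
  move=> cv bv; apply: (fconnect_via_parent sw_f (leaf_indeg lb) Epb bv).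
  by rewrite eq_sym (ancestor_neq_leaf sw_f lb cv) // eq_sym.
have fw := switching_sibling_parent sw_f (p_above _ cv1 bv1) av1.
have pv2 := p_above _ cv2 bv2.
have wv2 := fconnect_above_branch sw_f (arc_no_return Epw) pv2 (tree_descent_fconnect sw_f wa) av2.
have w_neq_v2 : w != v2 by apply: contraTneq pv2 => <-; apply: (arc_not_fconnect sw_f Epw).
move/negP: dv2; apply; apply: connect_trans (tree_descent_fconnect sw_f zd) _.
apply: connect_trans (fconnect_parent sw_f z_in1 Eqz) _.
by rewrite -fw; apply: fconnect_neq wv2 w_neq_v2.
Qed.

End SiblingReticulation.

Lemma sibling_descent_not_a p w : E p b -> E p w -> reticulation E w -> ~ tree_descent w a.
Proof.
move=> Epb Epw rw wa; have [_ _ ac_quads] := conds.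
have [q [Eqw qp]] : exists q, E q w /\ q != p.
  have [u1 [u2 [E1 E2 u12]]] := reticulation_parents rw.
  by have [u1p|] := eqVneq u1 p; [exists u2; rewrite -u1p eq_sym | exists u1].
have nlq : ~~ is_leaf E q by apply: contraL Eqw => /leaf_no_child.
have [z [Eqz z_in1]] := tree_child_of nlq; have [d zd] := tree_descent_exists z.
have [acd da db dc] := sibling_triple_acd Epb Epw rw wa Eqw qp Eqz z_in1 zd.
have [_ cbad] := ac_quads d (tree_descent_leaf zd) da db dc acd.
exact: (sibling_no_quad_cbad Epb Epw rw wa Eqw qp Eqz z_in1 zd cbad).
Qed.

Lemma b_not_below_coparent_child f p q z : switching f -> E p b -> reticulation E p ->
  E q p -> E q z -> z != p -> ~~ fconnect f b z.
Proof.
move=> sw_f Epb rp Eqp Eqz zp; apply/negP => /fconnect_split [zb|].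
  move: Eqz; rewrite zb => /(indeg1_parent (leaf_indeg lb))/(_ Epb) qp.
  by move: Eqp; rewrite qp (negbTE (arc_irrefl p)).
rewrite (switching_indeg1 sw_f (leaf_indeg lb) Epb) => /(fconnect_connect sw_f).
by apply/negP; apply: no_shortcut_path rp Eqp Eqz zp.
Qed.

Lemma coparent_descent_ac p q z y : E p b -> reticulation E p -> E q p -> E q z ->
  indeg E z = 1 -> z != p -> tree_descent z y -> (y == a) || (y == c).
Proof.
move=> Epb rp Eqp Eqz z_in1 zp zy; apply/norP => -[ya yc]; have ly := tree_descent_leaf zy.
have [[ab_x _ _] _ _] := conds.
have yb : y != b.
  apply: contraNneq (b_not_below_coparent_child switching_default Epb rp Eqp Eqz zp) => <-.
  exact: (tree_descent_fconnect switching_default zy).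
have [f [sw_f [v [av bv yv]]]] := ab_x y ly ya yb.
have pv : fconnect f p v.
  apply: (fconnect_via_parent sw_f (leaf_indeg lb) Epb bv).
  by rewrite eq_sym (ancestor_neq_leaf sw_f lb av ab).
have az : ~~ fconnect f a z.
  apply/negP => az; have zv := fconnect_above_branch sw_f (no_shortcut_path rp Eqp Eqz zp) pv az av.
  by rewrite (connect_trans (tree_descent_fconnect sw_f zy) zv) in yv.
have ap : ~~ fconnect f a p.
  by apply/negP => /(fconnect_reticulation_leaf sw_f rp Epb lb la) /eqP; rewrite (negbTE ab).
have sw_g := switching_reroute sw_f Eqp; set g := reroute f p q in sw_g *.
have below_q x : is_leaf E x -> fconnect g x q -> x = b \/ fconnect g x z.
  move=> lx /(fconnect_below_children sw_g Eqz Eqp zp lx) [xz|xp]; first by right.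
  by left; apply: (fconnect_reticulation_leaf sw_g rp Epb lb lx xp).
apply: (forbidden_config (h := q) (g := z) sw_g ly ya yb yc).
- apply: connect_trans (fconnect_parent sw_g (leaf_indeg lb) Epb) (fconnect1_eq _).
  by rewrite /g reroute_at.
- exact: (tree_descent_fconnect sw_g zy).
- exact: (fconnect_parent sw_g z_in1 Eqz).
- apply/negP => /(below_q a la) [/eqP|]; first by rewrite (negbTE ab).
  by rewrite /g fconnect_reroute // (negbTE az).
- exact: (b_not_below_coparent_child sw_g Epb rp Eqp Eqz zp).
- exact: below_q.
Qed.

Section CoparentChild.
Variables p qa qc za zc t s : V.
Hypotheses (Epb : E p b) (rp : reticulation E p) (Eap : E qa p) (Ecp : E qc p)
  (qac : qa != qc) (Eaz : E qa za) (Ecz : E qc zc) (za_in1 : indeg E za = 1)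
  (zc_in1 : indeg E zc = 1) (zap : za != p) (zcp : zc != p) (zc_c : tree_descent zc c)
  (Eta : E t a) (t_za : forall f, switching f -> fconnect f t za) (t_in1 : indeg E t = 1)
  (Ets : E t s) (sa : s != a).

Lemma second_child_neq_p : s != p.
Proof.
apply/eqP => sp; move: Ets; rewrite sp => Etp.
have t_za0 := t_za switching_default.
case: (reticulation_parent_cases rp Eap Ecp qac Etp) => tq; rewrite tq in t_za0.
  by move: (arc_not_fconnect switching_default Eaz); rewrite t_za0.
move/negP: (no_shortcut_path rp Eap Eaz zap); apply.
exact: connect_trans (fconnect_connect switching_default t_za0) (connect1 Ecp).
Qed.

(* Reroute p through qa and s through t: a leaf x below s then meets a at t,
   below the point qa where b joins, while c stays apart. *)
Lemma coparent_quad : exists x, [/\ is_leaf E x, x != a, x != b, x != c & quad_sw x a b c].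
Proof.
have not_both g l : switching g -> fconnect g l za -> fconnect g l zc -> False.
  move=> sw_g.
  exact: (coparent_children_disjoint sw_g rp Eap Ecp qac Eaz Ecz za_in1 zc_in1 zap zcp).
have ps : p != s by rewrite eq_sym second_child_neq_p.
pose g := reroute (reroute default_switching p qa) s t.
have sw_g : switching g by apply: switching_reroute (switching_reroute switching_default Eap) Ets.
have gp : g p = qa by rewrite /g reroute_ne // reroute_at.
have [x sx] := tree_descent_exists s; have lx := tree_descent_leaf sx.
have xt : fconnect g x t.
  by apply: connect_trans (tree_descent_fconnect sw_g sx) (fconnect1_eq _); rewrite /g reroute_at.
have at' := fconnect_parent sw_g (leaf_indeg la) Eta.
have ta := connect_trans (t_za sw_g) (fconnect_parent sw_g za_in1 Eaz).
have bqa : fconnect g b qa.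
  exact: connect_trans (fconnect_parent sw_g (leaf_indeg lb) Epb) (fconnect1_eq gp).
have bt : ~~ fconnect g b t.
  apply/negP => bt.
  have pt := fconnect_via_parent sw_g (leaf_indeg lb) Epb bt (leaf_not_tail lb Eta).
  have pt' : p != t by apply: contraTneq rp => ->; rewrite /reticulation t_in1.
  move: (arc_not_fconnect sw_g Eaz); rewrite -gp.
  by rewrite (connect_trans (fconnect_neq pt pt') (t_za sw_g)).
have ct : ~~ fconnect g c t.
  apply/negP => ct; apply: (not_both g c sw_g (connect_trans ct (t_za sw_g))).
  exact: (tree_descent_fconnect sw_g zc_c).
have cqa : ~~ fconnect g c qa.
  apply/negP => /(fconnect_below_children sw_g Eaz Eap zap lc) [cza|cp].
    exact: (not_both g c sw_g cza (tree_descent_fconnect sw_g zc_c)).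
  by move: bc; rewrite (fconnect_reticulation_leaf sw_g rp Epb lb lc cp) eqxx.
have xa : x != a.
  apply: contraNneq (not_fconnect_sibling sw_g (leaf_indeg la) Eta Ets sa) => <-.
  exact: (tree_descent_fconnect sw_g sx).
have xb : x != b by apply: contraNneq bt => <-.
have xc : x != c by apply: contraNneq ct => <-.
exists x; split => //; exists g; split => //; exists t, qa; split; split => //.
- exact: connect_trans xt ta.
- exact: connect_trans at' ta.
Qed.

End CoparentChild.

Lemma coparent_child_leaf p qa qc za zc : E p b -> reticulation E p -> E qa p -> E qc p ->
  qa != qc -> E qa za -> E qc zc -> indeg E za = 1 -> indeg E zc = 1 -> za != p -> zc != p ->
  tree_descent za a -> tree_descent zc c -> za = a.
Proof.
move=> Epb rp Eap Ecp qac Eaz Ecz za_in1 zc_in1 zap zcp za_a zc_c.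
case: (tree_descent_parent za_a) => [aza|[t [Eta t_za t_kind]]]; first by rewrite aza.
have t_in1 : indeg E t = 1 by case: t_kind => [->|].
have nlt : ~~ is_leaf E t by apply: contraL Eta => /leaf_no_child.
have nrt : ~~ reticulation E t by rewrite /reticulation t_in1.
have [s [Ets sa]] := other_child (nonleaf_outdeg2 nlt nrt) Eta.
have [x [lx xa xb xc quad]] := coparent_quad Epb rp Eap Ecp qac Eaz Ecz za_in1 zc_in1 zap zcp
  zc_c Eta t_za t_in1 Ets sa.
by have [_ no_quad _] := conds; case: (no_quad x lx xa xb xc); constructor 3.
Qed.

End Backward.

Lemma drc_parent_reticulation a b c p : is_leaf E a -> is_leaf E b -> is_leaf E c ->
  a != b -> b != c -> a != c -> drc_conditions a b c -> E p b -> reticulation E p.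
Proof.
move=> la lb lc ab bc ac conds Epb; apply/negPn/negP => nrp.
have nlp : ~~ is_leaf E p by apply: contraL Epb => /leaf_no_child.
have [w [Epw wb]] := other_child (nonleaf_outdeg2 nlp nrp) Epb.
have rw := sibling_reticulation la lb lc ab bc ac conds Epb Epw wb.
have [y wy] := tree_descent_exists w.
case/orP: (sibling_descent_ac la lb lc ab bc ac conds Epb Epw wb wy) => /eqP yac.
  by apply: (sibling_descent_not_a la lb ab bc ac conds Epb Epw rw); rewrite -yac.
have [ba cb ca] : [/\ b != a, c != b & c != a] by rewrite ![_ == a]eq_sym ![c == _]eq_sym.
apply: (sibling_descent_not_a lc lb cb ba ca (drc_conditions_sym conds) Epb Epw rw).
by rewrite -yac.
Qed.

Lemma drc_coparents a b c p : is_leaf E a -> is_leaf E b -> is_leaf E c ->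
  a != b -> b != c -> a != c -> drc_conditions a b c -> E p b -> reticulation E p ->
  double_reticulated_cherry E a b c.
Proof.
move=> la lb lc ab bc ac conds Epb rp.
have [q1 [q2 [E1 E2 q12]]] := reticulation_parents rp.
have descent q : E q p -> exists z y,
    [/\ E q z, indeg E z = 1, z != p, tree_descent z y & (y == a) || (y == c)].
  move=> Eqp; have nlq : ~~ is_leaf E q by apply: contraL Eqp => /leaf_no_child.
  have [z [Eqz z_in1]] := tree_child_of nlq.
  have zp : z != p by apply: contraTneq rp => <-; rewrite /reticulation z_in1.
  have [y zy] := tree_descent_exists z; exists z, y; split => //.
  exact: (coparent_descent_ac la lb lc ab bc ac conds Epb rp Eqp Eqz z_in1 zp zy).
have [z1 [y1 [Ez1 in1 z1p z1y1 y1ac]]] := descent q1 E1.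
have [z2 [y2 [Ez2 in2 z2p z2y2 y2ac]]] := descent q2 E2.
have y12 : y1 != y2.
  apply/eqP => y12; rewrite -y12 in z2y2.
  apply: (coparent_children_disjoint switching_default rp E1 E2 q12 Ez1 Ez2 in1 in2 z1p z2p
    (tree_descent_fconnect switching_default z1y1) (tree_descent_fconnect switching_default z2y2)).
have ba : b != a by rewrite eq_sym.
have cb : c != b by rewrite eq_sym.
have conds' := drc_conditions_sym conds.
have cherries za zc qa qc : E qa p -> E qc p -> qa != qc -> E qa za -> E qc zc ->
    indeg E za = 1 -> indeg E zc = 1 -> za != p -> zc != p ->
    tree_descent za a -> tree_descent zc c -> double_reticulated_cherry E a b c.
  move=> Eap Ecp qac Eaz Ecz ina inc zap zcp za_a zc_c.
  have qca : qc != qa by rewrite eq_sym.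
  have za_eq := coparent_child_leaf la lb lc bc conds Epb rp Eap Ecp qac Eaz Ecz
    ina inc zap zcp za_a zc_c.
  have zc_eq := coparent_child_leaf lc lb la ba conds' Epb rp Ecp Eap qca Ecz Eaz
    inc ina zcp zap zc_c za_a.
  by split; [exists qa, p | exists qc, p]; rewrite -?za_eq -?zc_eq.
have q21 : q2 != q1 by rewrite eq_sym.
move/orP: y1ac y12 z1y1 => [/eqP ->|/eqP ->]; move/orP: y2ac z2y2 => [/eqP ->|/eqP ->];
  rewrite ?eqxx // => z2y _ z1y.
- exact: (cherries z1 z2 q1 q2 E1 E2 q12 Ez1 Ez2 in1 in2 z1p z2p z1y z2y).
- exact: (cherries z2 z1 q2 q1 E2 E1 q21 Ez2 Ez1 in2 in1 z2p z1p z2y z1y).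
Qed.

Lemma drc_backward a b c : is_leaf E a -> is_leaf E b -> is_leaf E c ->
  a != b -> b != c -> a != c -> drc_conditions a b c -> double_reticulated_cherry E a b c.
Proof.
move=> la lb lc ab bc ac conds.
have /card_gt0P [p] : 0 < indeg E b by rewrite leaf_indeg.
rewrite inE => Epb; apply: (drc_coparents la lb lc ab bc ac conds Epb).
exact: (drc_parent_reticulation la lb lc ab bc ac conds Epb).
Qed.

End Network.

Definition drc_profile (V : finType) (E : rel V) (a b c : V) : Prop :=
  [/\ (forall x, x \in leaves E -> x \notin [:: a; b] -> triple_in E a b x)
      /\ (forall x, x \in leaves E -> x \notin [:: b; c] -> triple_in E b c x)
      /\ ~ triple_in E a c b,
      ~ (exists x, [/\ x \in leaves E, x \notin [:: a; b; c] &
           quad_in E x b a c \/ quad_in E x b c a \/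
           quad_in E x a b c \/ quad_in E x c b a]) &
      forall x, x \in leaves E -> x \notin [:: a; b; c] ->
        triple_in E a c x -> quad_in E a b c x /\ quad_in E c b a x].

Ltac distinct := rewrite /= ?inE ?negb_or; repeat (apply/andP; split); try done; by rewrite eq_sym.

Lemma drc_profile_conditions (V : finType) (E : rel V) r a b c : normal_network E r ->
  a \in leaves E -> b \in leaves E -> c \in leaves E -> uniq [:: a; b; c] ->
  drc_profile E a b c <-> drc_conditions E r a b c.
Proof.
move=> normalN la lb lc; rewrite uniq3 => /and3P [ab ac bc].
have tri := triple_inP normalN; have quad := quad_inP normalN.
have leafE x : (x \in leaves E) = is_leaf E x by rewrite inE.
split=> [[[ab_x [bc_x not_acb]] no_quad ac_quads]|[[ab_x bc_x not_acb] no_quad ac_quads]].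
  split; first split.
  - move=> x; rewrite -leafE => lx xa xb; have uabx : uniq [:: a; b; x] by distinct.
    by apply/(tri a b x la lb lx uabx); apply: ab_x => //; distinct.
  - move=> x; rewrite -leafE => lx xb xc; have ubcx : uniq [:: b; c; x] by distinct.
    by apply/(tri b c x lb lc lx ubcx); apply: bc_x => //; distinct.
  - have uacb : uniq [:: a; c; b] by distinct.
    by move/(tri a c b la lc lb uacb).
  - move=> x; rewrite -leafE => lx xa xb xc quads.
    apply: no_quad; exists x; split => //; first by distinct.
    by case: quads => q; [left | right; left | do 2 right; left | do 3 right];
      apply/(quad _ _ _ _ lx) => //; distinct.
  - move=> x; rewrite -leafE => lx xa xb xc acx; have uacx : uniq [:: a; c; x] by distinct.
    have [|q1 q2] := ac_quads x lx _ (proj2 (tri a c x la lc lx uacx) acx); first by distinct.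
    by split; apply/(quad _ _ _ _ _ _ _ lx) => //; distinct.
split; [split; [|split] | |].
- move=> x lx; rewrite !inE negb_or => /andP [xa xb]; have uabx : uniq [:: a; b; x] by distinct.
  by apply/(tri a b x la lb lx uabx); apply: ab_x; rewrite // -leafE.
- move=> x lx; rewrite !inE negb_or => /andP [xb xc]; have ubcx : uniq [:: b; c; x] by distinct.
  by apply/(tri b c x lb lc lx ubcx); apply: bc_x; rewrite // -leafE.
- have uacb : uniq [:: a; c; b] by distinct.
  by move/(tri a c b la lc lb uacb).
- case=> x [lx]; rewrite !inE !negb_or => /and3P [xa xb xc] quads.
  have lx' : is_leaf E x by rewrite -leafE.
  apply: (no_quad x lx' xa xb xc).
  by case: quads => [q|[q|[q|q]]]; [constructor 1 | constructor 2 | constructor 3 | constructor 4];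
    apply/(quad _ _ _ _ lx) => //; distinct.
- move=> x lx; rewrite !inE !negb_or => /and3P [xa xb xc] acx.
  have [lx' uacx] : is_leaf E x /\ uniq [:: a; c; x] by split; [rewrite -leafE | distinct].
  have [q1 q2] := ac_quads x lx' xa xb xc (proj1 (tri a c x la lc lx uacx) acx).
  by split; apply/(quad _ _ _ _ _ _ _ lx) => //; distinct.
Qed.

Theorem lemma8 (V : finType) (E : rel V) (r : V) (a b c : V) :
  normal_network E r ->
  3 <= #|leaves E| ->
  a \in leaves E -> b \in leaves E -> c \in leaves E ->
  uniq [:: a; b; c] ->
  (double_reticulated_cherry E a b c <->
   [/\ (* (i) *)
       (forall x, x \in leaves E -> x \notin [:: a; b] -> triple_in E a b x)
       /\ (forall x, x \in leaves E -> x \notin [:: b; c] -> triple_in E b c x)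
       /\ ~ triple_in E a c b,
       (* (ii) *)
       ~ (exists x, [/\ x \in leaves E, x \notin [:: a; b; c] &
            quad_in E x b a c \/ quad_in E x b c a \/
            quad_in E x a b c \/ quad_in E x c b a]) &
       (* (iii) *)
       forall x, x \in leaves E -> x \notin [:: a; b; c] ->
         triple_in E a c x -> quad_in E a b c x /\ quad_in E c b a x]).
Proof.
(* The bound on #|leaves E| follows from a, b, c being distinct leaves. *)
move=> normalN _ la lb lc uabc.
apply: iff_trans (iff_sym (drc_profile_conditions normalN la lb lc uabc)).
move: uabc; rewrite uniq3 => /and3P [ab ac bc]; rewrite !inE in la lb lc.
split; [exact: drc_forward | exact: drc_backward].
Qed.
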